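(* Let $p$ be a positive integer, $L,E,\sigma>0$ with $L,E\in 2^{-p}\mathbb{Z}$, and $\epsilon>0$ with $\sigma\ge\max\left(\frac{2}{\epsilon},2^{-p}\right)$. Then the truncated cumulative Laplace mechanism $\mathcal{M}^{(\mathtt{CLap})}_{L,E,\sigma,p}$ satisfies $d_\chi$-privacy with respect to the $\ell_1$ distance: for all $x,x'\in\mathcal{A}_{p,E}$ and all $z\in\mathcal{B}_{p,L+E}$, \[ f^{(\mathtt{CLap})}_{x,\sigma}(z)\le e^{\epsilon|x-x'|}f^{(\mathtt{CLap})}_{x',\sigma}(z). \]
   Context: For $p\in\mathbb{Z}_{>0}$ and $B>0$, $2^{-p}\mathbb{Z}=\{a/2^p: a\in\mathbb{Z}\}$, $\mathcal{A}_{p,B}:=[-B,B]\cap 2^{-p}\mathbb{Z}$ and $\mathcal{B}_{p,B}:=\mathcal{A}_{p,B}\setminus\{B\}$. The truncated cumulative Laplace mechanism $\mathcal{M}^{(\mathtt{CLap})}_{L,E,\sigma,p}$ with parameters $L,E,\sigma>0$ maps $x\in\mathcal{A}_{p,E}$ to $y\in\mathcal{B}_{p,L+E}$ with probability $f^{(\mathtt{CLap})}_{x,\sigma}(y)=\frac{1}{\lambda^{(\mathtt{CLap})}_{L,E,\sigma}}\int_y^{y+2^{-p}}e^{-\min(|r-x|,L)/\sigma}dr$, where $\lambda^{(\mathtt{CLap})}_{L,E,\sigma}=\sum_{y\in\mathcal{B}_{p,L+E}}\int_y^{y+2^{-p}}e^{-\min(|r-x|,L)/\sigma}dr$ is the normalizing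 constant (independent of $x$). *)

From Stdlib Require Import Reals ZArith List.
From Coquelicot Require Import Coquelicot.
Open Scope R_scope.

Definition dyadic (p : nat) (x : R) : Prop := exists a : Z, x = IZR a / 2 ^ p.

Definition setA (p : nat) (B x : R) : Prop := dyadic p x /\ - B <= x <= B.

Definition setB (p : nat) (B y : R) : Prop := setA p B y /\ y <> B.

(* integer indices a such that a / 2^p ∈ B_{p,B}, enumerated as a list *)
Definition idxB (p : nat) (B : R) : list Z :=
  let hi := Int_part (B * 2 ^ p) in
  let lo := (- hi)%Z in
  filter (fun a => if Req_EM_T (IZR a / 2 ^ p) B then false
                   else if Rle_dec (- B) (IZR a / 2 ^ p) then true else false)
    (map (fun k => (lo + Z.of_nat k)%Z) (seq 0 (Z.to_nat (hi - lo + 1)))).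

Definition clap_kernel (L sigma x r : R) : R := exp (- Rmin (Rabs (r - x)) L / sigma).

Definition clap_cell (L sigma : R) (p : nat) (x y : R) : R :=
  RInt (clap_kernel L sigma x) y (y + / 2 ^ p).

Definition clap_lambda (L E sigma : R) (p : nat) (x : R) : R :=
  fold_right Rplus 0
    (map (fun a => clap_cell L sigma p x (IZR a / 2 ^ p)) (idxB p (L + E))).

Definition clap_f (L E sigma : R) (p : nat) (x y : R) : R :=
  clap_cell L sigma p x y / clap_lambda L E sigma p x.

(* The integrand e^{-min(|r-x|,L)/σ} changes by a factor at most e^{|x-x'|/σ} when x is
   replaced by x', because the truncated distance min(|r-x|,L) is 1-Lipschitz in x.
   Integrating and summing, every cell and the normalizing constant obey the same bound
   (in both directions), so the ratio f_x(z) = cell/λ changes by at most e^{2|x-x'|/σ},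
   and 2/σ <= ε.  Neither the truncation L nor the dyadic grid plays any role. *)
From Stdlib Require Import Reals List Lra Psatz.
From Coquelicot Require Import Coquelicot.
Open Scope R_scope.

Lemma Rmin_Rabs_triang (a b c L : R) :
  Rmin (Rabs (a - c)) L <= Rmin (Rabs (a - b)) L + Rabs (b - c).
Proof.
  pose proof (Rabs_triang (a - b) (b - c)) as Htri.
  replace (a - b + (b - c)) with (a - c) in Htri by ring.
  pose proof (Rabs_pos (b - c)).
  unfold Rmin; destruct (Rle_dec (Rabs (a - c)) L), (Rle_dec (Rabs (a - b)) L); lra.
Qed.

Lemma lipschitz_continuous (f : R -> R) (K : R) :
  0 < K -> (forall a b, Rabs (f a - f b) <= K * Rabs (a - b)) ->
  forall r, continuous f r.
Proof.
  intros HK Hf r. apply filterlim_locally. intros eps.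
  assert (Hd : 0 < eps / K) by (apply Rdiv_lt_0_compat; [apply cond_pos | exact HK]).
  exists (mkposreal _ Hd). intros y Hy.
  change (Rabs (y - r) < eps / K) in Hy. change (Rabs (f y - f r) < eps).
  apply Rle_lt_trans with (K * Rabs (y - r)); [apply Hf |].
  apply (Rmult_lt_compat_l K) in Hy; [| exact HK].
  replace (K * (eps / K)) with (pos eps) in Hy by (field; lra). exact Hy.
Qed.

Lemma clap_kernel_continuous (L sigma x r : R) :
  0 < sigma -> continuous (clap_kernel L sigma x) r.
Proof.
  intros Hs. unfold clap_kernel.
  apply (continuous_comp (fun r => - Rmin (Rabs (r - x)) L / sigma) exp);
    [| apply continuous_exp].
  apply (lipschitz_continuous _ (/ sigma)); [now apply Rinv_0_lt_compat |].
  intros a b.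
  replace (- Rmin (Rabs (a - x)) L / sigma - - Rmin (Rabs (b - x)) L / sigma)
    with (/ sigma * (Rmin (Rabs (b - x)) L - Rmin (Rabs (a - x)) L)) by (field; lra).
  rewrite Rabs_mult, (Rabs_pos_eq (/ sigma)) by (left; now apply Rinv_0_lt_compat).
  apply Rmult_le_compat_l; [left; now apply Rinv_0_lt_compat |].
  pose proof (Rmin_Rabs_triang x a b L). pose proof (Rmin_Rabs_triang x b a L).
  rewrite (Rabs_minus_sym x a), (Rabs_minus_sym x b), (Rabs_minus_sym b a) in *.
  apply Rabs_le; split; lra.
Qed.

Lemma ex_RInt_clap_kernel (L sigma x a b : R) :
  0 < sigma -> ex_RInt (clap_kernel L sigma x) a b.
Proof.
  intros Hs. apply (ex_RInt_continuous (V := R_CompleteNormedModule)).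
  intros r _. now apply clap_kernel_continuous.
Qed.

Lemma exp_le_compat (a b : R) : a <= b -> exp a <= exp b.
Proof. intros [Hab | ->]; [left; now apply exp_increasing | right; reflexivity]. Qed.

Lemma clap_kernel_shift_le (L sigma x x' r : R) : 0 < sigma ->
  clap_kernel L sigma x r <= exp (Rabs (x - x') / sigma) * clap_kernel L sigma x' r.
Proof.
  intros Hs. unfold clap_kernel. rewrite <- exp_plus. apply exp_le_compat.
  pose proof (Rmin_Rabs_triang r x x' L).
  unfold Rdiv. apply Rmult_le_reg_r with sigma; [exact Hs |].
  replace (- Rmin (Rabs (r - x)) L * / sigma * sigma) with (- Rmin (Rabs (r - x)) L)
    by (field; lra).
  replace ((Rabs (x - x') * / sigma + - Rmin (Rabs (r - x')) L * / sigma) * sigma)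
    with (Rabs (x - x') - Rmin (Rabs (r - x')) L) by (field; lra).
  lra.
Qed.

Lemma cell_width_pos (p : nat) : 0 < / 2 ^ p.
Proof. apply Rinv_0_lt_compat, pow_lt; lra. Qed.

Lemma clap_cell_ge0 (L sigma : R) (p : nat) (x y : R) :
  0 < sigma -> 0 <= clap_cell L sigma p x y.
Proof.
  intros Hs. pose proof (cell_width_pos p).
  apply RInt_ge_0; [lra | now apply ex_RInt_clap_kernel |].
  intros r _. left; apply exp_pos.
Qed.

Lemma clap_cell_shift_le (L sigma : R) (p : nat) (x x' y : R) : 0 < sigma ->
  clap_cell L sigma p x y <= exp (Rabs (x - x') / sigma) * clap_cell L sigma p x' y.
Proof.
  intros Hs. pose proof (cell_width_pos p). unfold clap_cell.
  rewrite <- (RInt_scal (V := R_CompleteNormedModule))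
    by now apply ex_RInt_clap_kernel.
  apply RInt_le; [lra | now apply ex_RInt_clap_kernel | |].
  - apply (ex_RInt_scal (V := R_CompleteNormedModule)). now apply ex_RInt_clap_kernel.
  - intros r _. now apply clap_kernel_shift_le.
Qed.

Lemma fold_right_Rplus_map_ge0 {A : Type} (F : A -> R) (l : list A) :
  (forall a, 0 <= F a) -> 0 <= fold_right Rplus 0 (map F l).
Proof.
  intros HF. induction l as [| a l IH]; simpl; [lra |]. specialize (HF a). lra.
Qed.

Lemma fold_right_Rplus_map_le_scal {A : Type} (F G : A -> R) (c : R) (l : list A) :
  (forall a, F a <= c * G a) ->
  fold_right Rplus 0 (map F l) <= c * fold_right Rplus 0 (map G l).
Proof.
  intros HFG. induction l as [| a l IH]; simpl; [lra |]. specialize (HFG a). lra.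
Qed.

Lemma clap_lambda_ge0 (L E sigma : R) (p : nat) (x : R) :
  0 < sigma -> 0 <= clap_lambda L E sigma p x.
Proof.
  intros Hs. apply fold_right_Rplus_map_ge0. intros a. now apply clap_cell_ge0.
Qed.

Lemma clap_lambda_shift_le (L E sigma : R) (p : nat) (x x' : R) : 0 < sigma ->
  clap_lambda L E sigma p x <= exp (Rabs (x - x') / sigma) * clap_lambda L E sigma p x'.
Proof.
  intros Hs. apply fold_right_Rplus_map_le_scal. intros a. now apply clap_cell_shift_le.
Qed.

(* Holds at [b = 0] because [/ 0 = 0]. *)
Lemma Rinv_ge0 (b : R) : 0 <= b -> 0 <= / b.
Proof.
  intros [Hb | <-]; [left; now apply Rinv_0_lt_compat | rewrite Rinv_0; lra].
Qed.

Lemma clap_f_ge0 (L E sigma : R) (p : nat) (x y : R) :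
  0 < sigma -> 0 <= clap_f L E sigma p x y.
Proof.
  intros Hs. unfold clap_f, Rdiv.
  apply Rmult_le_pos; [now apply clap_cell_ge0 |].
  apply Rinv_ge0. now apply clap_lambda_ge0.
Qed.

Lemma Rdiv_le_mult_sqr (a b a' b' c : R) :
  0 <= a' -> 0 <= b -> 0 <= b' -> 0 <= c ->
  a <= c * a' -> b <= c * b' -> b' <= c * b ->
  a / b <= c * c * (a' / b').
Proof.
  intros Ha' Hb Hb' Hc Ha Hbb' Hb'b.
  assert (Hrhs : 0 <= c * c * (a' / b')).
  { apply Rmult_le_pos; [nra |]. unfold Rdiv. apply Rmult_le_pos; [exact Ha' |].
    now apply Rinv_ge0. }
  destruct Hb as [Hb | <-]; [| unfold Rdiv; rewrite Rinv_0, Rmult_0_r; exact Hrhs].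
  assert (Hb'0 : 0 < b') by nra.
  apply Rmult_le_reg_r with (b * b'); [nra |].
  unfold Rdiv.
  replace (a * / b * (b * b')) with (a * b') by (field; lra).
  replace (c * c * (a' * / b') * (b * b')) with ((c * a') * (c * b)) by (field; lra).
  apply Rle_trans with (c * a' * b').
  - apply Rmult_le_compat_r; lra.
  - apply Rmult_le_compat_l; [nra | exact Hb'b].
Qed.

Lemma exp_sqr_le_of_sigma (eps sigma d : R) :
  0 < eps -> 0 <= d -> 2 / eps <= sigma ->
  exp (d / sigma) * exp (d / sigma) <= exp (eps * d).
Proof.
  intros Heps Hd Hs. rewrite <- exp_plus. apply exp_le_compat.
  assert (Hsig : 0 < sigma) by (eapply Rlt_le_trans; [| exact Hs]; apply Rdiv_lt_0_compat; lra).
  assert (H2 : 2 <= eps * sigma).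
  { apply Rmult_le_compat_l with (r := eps) in Hs; [| lra].
    replace (eps * (2 / eps)) with 2 in Hs by (field; lra). exact Hs. }
  apply Rmult_le_reg_r with sigma; [exact Hsig |].
  replace ((d / sigma + d / sigma) * sigma) with (2 * d) by (field; lra).
  nra.
Qed.

Theorem mainTheorem10 (p : nat) (L E sigma eps : R) :
  (0 < p)%nat -> 0 < L -> 0 < E -> 0 < sigma -> 0 < eps ->
  dyadic p L -> dyadic p E ->
  Rmax (2 / eps) (/ 2 ^ p) <= sigma ->
  forall x x' z : R,
    setA p E x -> setA p E x' -> setB p (L + E) z ->
    clap_f L E sigma p x z <= exp (eps * Rabs (x - x')) * clap_f L E sigma p x' z.
Proof.
  intros _ _ _ Hs Heps _ _ Hmax x x' z _ _ _.
  set (c := exp (Rabs (x - x') / sigma)).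
  apply Rle_trans with (c * c * clap_f L E sigma p x' z).
  - unfold clap_f. apply Rdiv_le_mult_sqr.
    + now apply clap_cell_ge0.
    + now apply clap_lambda_ge0.
    + now apply clap_lambda_ge0.
    + left; apply exp_pos.
    + now apply clap_cell_shift_le.
    + now apply clap_lambda_shift_le.
    + unfold c. rewrite Rabs_minus_sym. now apply clap_lambda_shift_le.
  - apply Rmult_le_compat_r; [now apply clap_f_ge0 |].
    apply exp_sqr_le_of_sigma; [exact Heps | apply Rabs_pos |].
    exact (Rle_trans _ _ _ (Rmax_l _ _) Hmax).
Qed.
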